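(* Let $\mathcal B$ be the category of complete lattices and monotone (not necessarily join-preserving) maps, and let $\mathcal E$ be the category whose objects are pointed complete lattices $(X,x_0)$ and whose morphisms $f:(X,x_0)\to(Y,y_0)$ are monotone maps $f:X\to Y$ with $f(x_0)\le y_0$, concrete over $\mathcal B$ via the forgetful functor. Then $\mathcal E$ is cofibred over $\mathcal B$, every fibre $\mathcal E_X$ is a complete lattice (isomorphic to $X$), but the $\mathcal Q_{\mathcal B}$-category $\overline{\mathcal E}$ is not tensored.
   Context: For a concrete category $|\text{-}|:\mathcal E\to\mathcal B$ (faithful functor), a map $f:|X|\to|Y|$ is an $\mathcal E$-morphism if it is $|f'|$ for some $f':X\to Y$; $\overline{\mathcal E}(X,Y)$ is the set of these. $\mathcal E$ is cofibred if for every $X$ and map $f:|X|\to T$ there is $f\star X$ with $|f\star X|=T$ such that $g:T\to|Z|$ is an $\mathcal E$-morphism $f\star X\to Z$ iff $g\circ f$ is an $\mathcal E$-morphism $X\to Z$. The fibre $\mathcal E_T$ is the class of objects $Y$ with $|Y|=T$, preordered by $Y\le Y'$ iff $1_T$ is an $\mathcal E$-morphism $Y\to Y'$. For $\mathbf f\subseteq\mathcal B(S,T)$, $\mathbf h\subseteq\mathcal B(S,U)$ put $\mathbf h\swarrow\mathbf f=\{g\in\mathcal B(T,U)\mid\forall f\in\mathbf f:g\circ f\in\mathbf h\}$. $\overline{\mathcal E}$ is tensored if for every $X\in\mathrm{ob}\,\mathcal E$ and every subset $\mathbf u\subseteq\mathcal B(|X|,T)$ there is $Y$ with $|Y|=T$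 and $\overline{\mathcal E}(Y,Z)=\overline{\mathcal E}(X,Z)\swarrow\mathbf u$ for all $Z$. *)

Set Implicit Arguments.

Record CLat := {
  car :> Type;
  le : car -> car -> Prop;
  le_refl : forall x, le x x;
  le_trans : forall x y z, le x y -> le y z -> le x z;
  le_antisym : forall x y, le x y -> le y x -> x = y;
  sup : (car -> Prop) -> car;
  sup_ub : forall (P : car -> Prop) x, P x -> le x (sup P);
  sup_lub : forall (P : car -> Prop) y, (forall x, P x -> le x y) -> le (sup P) y
}.
Arguments le {c} _ _.
Arguments sup {c} _.

Definition monotone {X Y : CLat} (f : X -> Y) : Prop :=
  forall x x', le x x' -> le (f x) (f x').

Definition Bhom (X Y : CLat) := { f : X -> Y | monotone f }.

Record PCLat := mkP { base : CLat; pt : car base }.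

(* Ebar(X,Y): the maps |X| -> |Y| that underlie an E-morphism, i.e.
   monotone maps f with f x0 <= y0. *)
Definition Ebar (X Y : PCLat) (f : base X -> base Y) : Prop :=
  monotone f /\ le (f (pt X)) (pt Y).

(* E is cofibred over B.  An object over T is a pointed lattice (T, t),
   so f * X is given by a point t of T. *)
Definition E_cofibred : Prop :=
  forall (X : PCLat) (T : CLat) (f : Bhom (base X) T),
    exists t : car T,
      forall (Z : PCLat) (g : Bhom T (base Z)),
        Ebar (mkP T t) Z (proj1_sig g) <->
        Ebar X Z (fun x => proj1_sig g (proj1_sig f x)).

(* Fibre E_T: objects over T (identified with points of T), preordered by
   y <= y' iff 1_T is an E-morphism (T,y) -> (T,y'). *)
Definition fibre_le (T : CLat) (y y' : car T) : Prop :=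
  Ebar (mkP T y) (mkP T y') (fun x => x).

Definition fibre_complete_iso_to (T : CLat) : Prop :=
  (forall y, fibre_le T y y) /\
  (forall y y' y'', fibre_le T y y' -> fibre_le T y' y'' -> fibre_le T y y'') /\
  (forall y y', fibre_le T y y' -> fibre_le T y' y -> y = y') /\
  (forall P : car T -> Prop, exists s : car T,
      (forall y, P y -> fibre_le T y s) /\
      (forall b, (forall y, P y -> fibre_le T y b) -> fibre_le T s b)) /\
  (exists (phi : car T -> car T) (psi : car T -> car T),
      (forall y, psi (phi y) = y) /\ (forall y, phi (psi y) = y) /\
      (forall y y', fibre_le T y y' <-> le (phi y) (phi y'))).

(* Ebar is tensored: for every X and every u ⊆ B(|X|,T) there is Y over T
   with Ebar(Y,Z) = Ebar(X,Z) ↙ u for all Z (equality of subsets of B(T,|Z|)). *)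
Definition Ebar_tensored : Prop :=
  forall (X : PCLat) (T : CLat) (u : Bhom (base X) T -> Prop),
    exists y : car T,
      forall (Z : PCLat) (g : Bhom T (base Z)),
        Ebar (mkP T y) Z (proj1_sig g) <->
        (forall f : Bhom (base X) T, u f ->
           Ebar X Z (fun x => proj1_sig g (proj1_sig f x))).

(** The push-forward of (X, x0) along f is (T, f x0), and the fibre over T is
    T itself, ordered by the order of T.  A tensor of (X, x0) by a set u of
    maps would be a point y of T above every f x0 (f in u) that still lies
    below every z0 with g (f x0) <= z0 for all f in u, for every monotone g.
    Taking u = {const a, const b} this forces every monotone map to preserve
    the binary join of a and b, which fails for the meet map
    Prop * Prop -> Prop at a = (True, False), b = (False, True). *)

From Stdlib Require Import PropExtensionality.

Lemma monotone_id (X : CLat) : monotone (fun x : car X => x).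
Proof. intros x x' H; exact H. Qed.

Lemma monotone_const (X Y : CLat) (c : car Y) : monotone (fun _ : car X => c).
Proof. intros x x' _; apply le_refl. Qed.

Lemma monotone_comp (X Y Z : CLat) (f : car X -> car Y) (g : car Y -> car Z) :
  monotone f -> monotone g -> monotone (fun x => g (f x)).
Proof. intros Hf Hg x x' H; apply Hg, Hf, H. Qed.

Definition join2 {T : CLat} (a b : car T) : car T :=
  sup (fun x => x = a \/ x = b).

Lemma le_join2l {T : CLat} (a b : car T) : le a (join2 a b).
Proof. apply sup_ub; left; reflexivity. Qed.

Lemma le_join2r {T : CLat} (a b : car T) : le b (join2 a b).
Proof. apply sup_ub; right; reflexivity. Qed.

Lemma join2_lub {T : CLat} (a b c : car T) :
  le a c -> le b c -> le (join2 a b) c.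
Proof. intros Ha Hb; apply sup_lub; intros x [-> | ->]; assumption. Qed.

Definition prop_clat : CLat.
Proof.
  refine (@Build_CLat Prop (fun p q => p -> q) _ _ _
            (fun P => exists p, P p /\ p) _ _).
  - auto.
  - auto.
  - intros; apply propositional_extensionality; tauto.
  - intros P p Hp H; exists p; auto.
  - intros P q H [p [Hp H']]; exact (H p Hp H').
Defined.

Definition prod_clat (X Y : CLat) : CLat.
Proof.
  refine (@Build_CLat (car X * car Y)
            (fun u v => le (fst u) (fst v) /\ le (snd u) (snd v)) _ _ _
            (fun P => (sup (fun x => exists u, P u /\ fst u = x),
                       sup (fun y => exists u, P u /\ snd u = y))) _ _).
  - intros u; split; apply le_refl.
  - intros u v w [H1 H2] [H3 H4]; split; eapply le_trans; eauto.
  - intros [x y] [x' y'] [H1 H2] [H3 H4]; simpl in *.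
    f_equal; apply le_antisym; assumption.
  - intros P u Hu; split; apply sup_ub; exists u; auto.
  - intros P v H; split; apply sup_lub; intros x [u [Hu <-]]; apply (H u Hu).
Defined.

Lemma E_cofibred_holds : E_cofibred.
Proof.
  intros X T [f Hf]; exists (f (pt X)); intros Z [g Hg]; simpl.
  split; intros [_ H]; split; auto.
  apply monotone_comp; assumption.
Qed.

Lemma fibre_leE (T : CLat) (y y' : car T) : fibre_le T y y' <-> le y y'.
Proof.
  split; [intros [_ H]; exact H | intros H; split; [apply monotone_id | exact H]].
Qed.

Lemma fibre_complete_iso_to_holds (T : CLat) : fibre_complete_iso_to T.
Proof.
  unfold fibre_complete_iso_to; setoid_rewrite fibre_leE.
  split; [|split; [|split; [|split]]].
  - apply le_refl.
  - intros y y' y''; apply le_trans.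
  - apply le_antisym.
  - intros P; exists (sup P); split; [apply sup_ub | apply sup_lub].
  - exists (fun y => y), (fun y => y); split; [|split]; reflexivity.
Qed.

(* The point of [X] is irrelevant: membership in [u] only looks at the image
   of that point. *)
Lemma Ebar_tensored_monotone_join2 :
  Ebar_tensored ->
  forall (T Z : CLat) (g : Bhom T Z) (a b : car T),
    le (proj1_sig g (join2 a b)) (join2 (proj1_sig g a) (proj1_sig g b)).
Proof.
  intros Hten T Z [g Hg] a b; simpl.
  destruct (Hten (mkP T a) T (fun f => proj1_sig f a = a \/ proj1_sig f a = b))
    as [y Hy].
  assert (Hub : le (join2 a b) y).
  { assert (Hid : Ebar (mkP T y) (mkP T y) (fun x => x))
      by (split; [apply monotone_id | apply le_refl]).
    pose proof (proj1 (Hy (mkP T y) (exist _ _ (monotone_id T))) Hid) as Hu.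
    apply join2_lub.
    - apply (Hu (exist _ _ (monotone_const T T a))); left; reflexivity.
    - apply (Hu (exist _ _ (monotone_const T T b))); right; reflexivity. }
  assert (Hgy : le (g y) (join2 (g a) (g b))).
  { apply (proj2 (Hy (mkP Z (join2 (g a) (g b))) (exist _ _ Hg))).
    intros [f Hf] Hfa; split; simpl in *.
    - apply monotone_comp; assumption.
    - destruct Hfa as [-> | ->]; [apply le_join2l | apply le_join2r]. }
  eapply le_trans; [apply Hg, Hub | exact Hgy].
Qed.

Definition prop2_clat : CLat := prod_clat prop_clat prop_clat.

Definition prop_meet : Bhom prop2_clat prop_clat.
Proof.
  exists (fun u : Prop * Prop => fst u /\ snd u).
  intros u v [H1 H2]; simpl in *; tauto.
Defined.

Lemma prop_meet_join2_true_false :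
  proj1_sig prop_meet (join2 (T := prop2_clat) (True, False) (False, True)).
Proof.
  split.
  - apply (proj1 (le_join2l (T := prop2_clat) (True, False) (False, True))); exact I.
  - apply (proj2 (le_join2r (T := prop2_clat) (True, False) (False, True))); exact I.
Qed.

Lemma prop_join2_false (p q : Prop) : ~ p -> ~ q -> ~ join2 (T := prop_clat) p q.
Proof. exact (join2_lub (T := prop_clat) p q False). Qed.

Theorem mainTheorem4 :
  E_cofibred /\
  (forall T : CLat, fibre_complete_iso_to T) /\
  ~ Ebar_tensored.
Proof.
  split; [exact E_cofibred_holds |].
  split; [exact fibre_complete_iso_to_holds |].
  intros Hten.
  apply (prop_join2_false (True /\ False) (False /\ True)); [tauto | tauto |].
  exact (Ebar_tensored_monotone_join2 Hten _ _ prop_meet _ _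
           prop_meet_join2_true_false).
Qed.
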